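(* Let $G$ be a finite group, and let $a_1,a_2,a_3,a_4$ denote independent uniformly random elements of $G$. Then \begin{align*} Pr(a_1a_2a_3a_4=a_2a_1a_4a_3)&=Pr(a_1a_2a_3a_4=a_4a_3a_2a_1)=Pr^4(G)\\ &=\frac{\sum_{x,y\in G}|Stab.Prod_2(x,y)|}{|G|^4}\\ &=\sum_{i,k,j=1}^{c(G)}\frac{|\Omega_j|\cdot c_{i,k;j}(G)^2}{|\Omega_i|\cdot|\Omega_k|\cdot|G|^2}\\ &=\sum_{i,k,j=1}^{c(G)}\frac{|\Omega_j|\cdot c_{i,k;j}(G)\cdot c_{k,i;j}(G)}{|\Omega_i|\cdot|\Omega_k|\cdot|G|^2}. \end{align*}
   Context: $c(G)$ is the number of conjugacy classes of $G$, and $\Omega_1,\dots,\Omega_{c(G)}$ are these classes. $Pr^4(G)$ is the probability that $a_1a_2a_3a_4=a_4a_3a_2a_1$ for independent uniformly random $a_i\in G$. For $g_1,\dots,g_n\in G$, $Stab.Prod_n(g_1,\dots,g_n)$ is the set of all tuples $(b_1,\dots,b_n)\in G^n$ such that $b_1^{-1}g_1b_1\cdot b_2^{-1}g_2b_2\cdots b_n^{-1}g_nb_n=g_1g_2\cdots g_n$. For indices $i_1,\dots,i_n,j$, $c_{i_1,\dots,i_n;j}(G)$ is the number of tuples $(x_1,\dots,x_n)$ with $x_t\in\Omega_{i_t}$ for all $t$ and $x_1x_2\cdots x_n=y$, for a fixed $y\in\Omega_j$. This number does not depend on the choice of $y$. *)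

From mathcomp Require Import all_boot all_order all_algebra all_fingroup.
Set Implicit Arguments. Unset Strict Implicit. Unset Printing Implicit Defensive.
Import GRing.Theory Num.Theory.
Local Open Scope group_scope.

Definition prob4 (gT : finGroupType) (G : {group gT})
    (P : gT -> gT -> gT -> gT -> bool) : rat :=
  ((\sum_(a1 in G) \sum_(a2 in G) \sum_(a3 in G) \sum_(a4 in G)
       (P a1 a2 a3 a4 : nat))%N)%:R / (#|G| ^ 4)%N%:R.

Definition Pr4 (gT : finGroupType) (G : {group gT}) : rat :=
  prob4 G (fun a1 a2 a3 a4 => a1 * a2 * a3 * a4 == a4 * a3 * a2 * a1).

(* Stab.Prod_2(x, y) = {(b1,b2) in G^2 | b1^-1 x b1 * b2^-1 y b2 = x y}.
   In mathcomp, x ^ b = b^-1 * x * b. *)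
Definition StabProd2 (gT : finGroupType) (G : {group gT}) (x y : gT)
    : {set gT * gT} :=
  [set b : gT * gT | [&& b.1 \in G, b.2 \in G & x ^ b.1 * y ^ b.2 == x * y]].

Definition class_mult (gT : finGroupType) (A B C : {set gT}) : nat :=
  #|[set p : gT * gT | [&& p.1 \in A, p.2 \in B & p.1 * p.2 == repr C]]|.

From mathcomp Require Import all_boot all_order all_algebra all_fingroup.
From mathcomp Require Import ring.
Import GRing.Theory Num.Theory.
Set Implicit Arguments. Unset Strict Implicit. Unset Printing Implicit Defensive.

(* Writing u = a1 a2 and v = a3 a4, the equation a1a2a3a4 = a2a1a4a3 becomes
   u^a1 v^a3 = uv, and a1a2a3a4 = a4a3a2a1 becomes v^a3 u^a1 = uv, which after
   conjugation by u reads v^(a3 u) u^(a1 u) = vu; so both events have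
   \sum_{x,y} |Stab.Prod_2(x,y)| solutions.  By orbit-stabiliser,
   |Stab.Prod_2(x,y)| = |C(x)| |C(y)| N(xy), where N(z) counts the pairs of
   x^G * y^G with product z.  Summing N(xy) over x^G * y^G gives \sum_z N(z)^2,
   and N is constant, equal to c_{i,k;j}, on each class Omega_j.  Finally
   (x, y) |-> (x y x^-1, x) exchanges the roles of the two classes, so
   c_{i,k;j} = c_{k,i;j}. *)

Local Open Scope group_scope.

Section BigGroup.

Variables (gT : finGroupType) (G : {group gT}).
Variables (R : Type) (idx : R) (op : Monoid.com_law idx).

Lemma big_classes (F : gT -> R) :
  \big[op/idx]_(x in G) F x = \big[op/idx]_(A in classes G) \big[op/idx]_(x in A) F x.
Proof.
have /and3P[/eqP covG trivG _] := classes_partition G.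
by rewrite -{1}covG big_trivIset.
Qed.

Lemma reindex_big_mulgl (a : gT) (F : gT -> R) : a \in G ->
  \big[op/idx]_(b in G) F b = \big[op/idx]_(u in G) F (a * u).
Proof.
move=> Ga; rewrite -{1}(lcoset_id Ga) -lcosetE /lcoset big_imset //=.
by move=> u v _ _; apply: mulgI.
Qed.

Lemma reindex_big_mulgr (a : gT) (F : gT -> R) : a \in G ->
  \big[op/idx]_(b in G) F b = \big[op/idx]_(u in G) F (u * a).
Proof.
move=> Ga; rewrite -{1}(rcoset_id Ga) -rcosetE /rcoset big_imset //=.
by move=> u v _ _; apply: mulIg.
Qed.

End BigGroup.

Section Conjugation.

Variables (gT : finGroupType) (G : {group gT}).

Lemma classes_sub (A : {set gT}) : A \in classes G -> A \subset G.
Proof. by case/imsetP=> a Ga ->; rewrite class_subG. Qed.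

Lemma card_conjg_fiber (x p : gT) :
  p \in x ^: G -> #|[set b in G | x ^ b == p]| = #|'C_G[x]|.
Proof.
case/imsetP=> g Gg ->; rewrite -(card_rcoset 'C_G[x] g); apply: eq_card => b.
rewrite mem_rcoset in_setI inE groupMr ?groupV //; congr (_ && _).
rewrite -(inj_eq (conjg_inj g^-1)) -!conjgM mulgV conjg1.
apply/eqP/cent1P => [xbx | cx]; last by rewrite conjgE -cx mulKg.
by rewrite /commute -{1}xbx conjgE mulKVg.
Qed.

Lemma sum_conjg (x : gT) (F : gT -> nat) :
  \sum_(b in G) F (x ^ b)%g = (#|'C_G[x]| * \sum_(p in x ^: G) F p)%N.
Proof.
rewrite (partition_big (conjg x) (mem (x ^: G))) /=; last first.
  by move=> b Gb; apply: memJ_class.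
rewrite big_distrr /=; apply: eq_bigr => p xGp.
rewrite (eq_bigr (fun _ => F p)); last by move=> b /andP[_ /eqP->].
rewrite sum_nat_const -(card_conjg_fiber xGp); congr (_ * _)%N.
by apply: eq_card => b; rewrite inE.
Qed.

Lemma card_cent1_class (x : gT) : x \in G -> (#|'C_G[x]| * #|x ^: G|)%N = #|G|.
Proof. by move=> Gx; rewrite -index_cent1 Lagrange ?subsetIl. Qed.

Lemma class_eq_classes (A : {set gT}) (x : gT) :
  A \in classes G -> x \in A -> x ^: G = A.
Proof. by case/imsetP=> a _ -> /class_eqP. Qed.

Lemma card_classes_gt0 (A : {set gT}) : A \in classes G -> 0 < #|A|.
Proof. by move=> cA; apply/card_gt0P; exists (repr A); apply: (mem_repr_classes cA). Qed.

End Conjugation.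

Section ProductCount.

Variables (gT : finGroupType) (G : {group gT}).

Definition prod_count (A B : {set gT}) (z : gT) : nat :=
  \sum_(x in A) \sum_(y in B) ((x * y)%g == z : nat).

Lemma class_multE (A B C : {set gT}) : class_mult A B C = prod_count A B (repr C).
Proof.
rewrite /class_mult /prod_count pair_big /= -sum1_card big_mkcond [RHS]big_mkcond.
by apply: eq_bigr => p _; rewrite inE; case: (p.1 \in A) (p.2 \in B) => [] [].
Qed.

Lemma sum_prod_count (A B : {set gT}) (F : gT -> nat) :
  A \subset G -> B \subset G ->
  \sum_(x in A) \sum_(y in B) F (x * y)%g = \sum_(z in G) (prod_count A B z * F z)%N.
Proof.
move=> sAG sBG.
transitivity (\sum_(x in A) \sum_(y in B) \sum_(z in G) ((x * y)%g == z) * F z)%N.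
  apply: eq_bigr => x Ax; apply: eq_bigr => y By.
  have Gxy : (x * y)%g \in G by rewrite groupM ?(subsetP sAG x) ?(subsetP sBG y).
  rewrite (bigD1 (x * y)%g) //= eqxx mul1n big1 ?addn0 // => z /andP[_ zxy].
  by rewrite eq_sym (negbTE zxy).
under eq_bigr do rewrite exchange_big /=.
rewrite exchange_big /=; apply: eq_bigr => z _.
by rewrite /prod_count big_distrl; apply: eq_bigr => x _; rewrite big_distrl.
Qed.

Lemma prod_count_conjg (A B : {set gT}) (z g : gT) :
  A \in classes G -> B \in classes G -> g \in G ->
  prod_count A B (z ^ g) = prod_count A B z.
Proof.
case/imsetP=> a _ ->; case/imsetP=> b _ -> Gg.
rewrite /prod_count -{1}(classGidr a Gg) big_imset /=; last first.
  by move=> u v _ _; apply: conjg_inj.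
apply: eq_bigr => u _; rewrite -{1}(classGidr b Gg) big_imset /=; last first.
  by move=> u' v _ _; apply: conjg_inj.
by apply: eq_bigr => v _; rewrite -conjMg (inj_eq (conjg_inj g)).
Qed.

Lemma prod_count_class (A B C : {set gT}) (z : gT) :
  A \in classes G -> B \in classes G -> C \in classes G -> z \in C ->
  prod_count A B z = class_mult A B C.
Proof.
move=> cA cB cC Cz; rewrite class_multE.
have /imsetP[g Gg ->] : repr C \in z ^: G.
  by have := mem_repr_classes cC; case/imsetP: cC Cz => c _ -> /class_eqP->.
by rewrite prod_count_conjg.
Qed.

Lemma sum_prod_count_sq (A B : {set gT}) :
  A \in classes G -> B \in classes G ->
  \sum_(z in G) (prod_count A B z ^ 2)%N
    = \sum_(C in classes G) (#|C| * class_mult A B C ^ 2)%N.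
Proof.
move=> cA cB; rewrite big_classes; apply: eq_bigr => C cC.
rewrite -sum_nat_const; apply: eq_bigr => z Cz.
by rewrite (prod_count_class cA cB cC Cz).
Qed.

Lemma prod_count_sym (A B : {set gT}) (z : gT) :
  A \in classes G -> B \in classes G -> prod_count A B z = prod_count B A z.
Proof.
move=> cA cB; rewrite /prod_count [RHS]exchange_big; apply: eq_bigr => x Ax.
have Gx : x \in G := subsetP (classes_sub cA) x Ax.
case/imsetP: cB => b _ ->; rewrite -[in RHS](classGidr b (groupVr Gx)).
rewrite [in RHS]big_imset /=; last by move=> u v _ _; apply: conjg_inj.
by apply: eq_bigr => y _; rewrite conjgE invgK -mulgA mulgVK.
Qed.

End ProductCount.

Section StabProd.

Variables (gT : finGroupType) (G : {group gT}).

Lemma card_StabProd2 (x y : gT) :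
  #|StabProd2 G x y| = \sum_(b1 in G) \sum_(b2 in G) ((x ^ b1 * y ^ b2)%g == (x * y)%g : nat).
Proof.
rewrite pair_big /= -sum1_card big_mkcond [RHS]big_mkcond /=.
apply: eq_bigr => b _; rewrite inE.
by case: (b.1 \in G) (b.2 \in G) => [] [].
Qed.

Lemma card_StabProd2_prod_count (x y : gT) :
  #|StabProd2 G x y|
    = (#|'C_G[x]| * #|'C_G[y]| * prod_count (x ^: G) (y ^: G) (x * y)%g)%N.
Proof.
rewrite card_StabProd2.
rewrite (sum_conjg G x (fun p => \sum_(b2 in G) ((p * y ^ b2)%g == (x * y)%g : nat))).
rewrite -mulnA; congr (_ * _)%N.
rewrite /prod_count big_distrr /=; apply: eq_bigr => p _.
by rewrite (sum_conjg G y (fun q => ((p * q)%g == (x * y)%g : nat))).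
Qed.

Lemma sum_card_StabProd2_classes (A B : {set gT}) :
  A \in classes G -> B \in classes G ->
  (#|A| * #|B| * \sum_(x in A) \sum_(y in B) #|StabProd2 G x y|
    = #|G| ^ 2 * \sum_(C in classes G) #|C| * class_mult A B C ^ 2)%N.
Proof.
move=> cA cB; rewrite -sum_prod_count_sq //.
under [in RHS]eq_bigr do rewrite -mulnn.
rewrite -sum_prod_count ?classes_sub // !big_distrr /=; apply: eq_bigr => x Ax.
rewrite !big_distrr /=; apply: eq_bigr => y By.
have Gx := subsetP (classes_sub cA) x Ax; have Gy := subsetP (classes_sub cB) y By.
rewrite card_StabProd2_prod_count (class_eq_classes cA Ax) (class_eq_classes cB By).
have cardG2 : (#|G| ^ 2 = (#|'C_G[x]| * #|A|) * (#|'C_G[y]| * #|B|))%N.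
  by rewrite -(class_eq_classes cA Ax) -(class_eq_classes cB By) !card_cent1_class ?mulnn.
by rewrite cardG2; ring.
Qed.

Lemma sum_quadruples_pair_products (F : gT -> gT -> gT -> gT -> nat) :
  \sum_(a1 in G) \sum_(a2 in G) \sum_(a3 in G) \sum_(a4 in G) F a1 a2 a3 a4
  = \sum_(a1 in G) \sum_(u in G) \sum_(a3 in G) \sum_(v in G)
      F a1 (a1^-1 * u)%g a3 (a3^-1 * v)%g.
Proof.
apply: eq_bigr => a1 G1; rewrite (reindex_big_mulgl _ _ (groupVr G1)).
apply: eq_bigr => u _; apply: eq_bigr => a3 G3.
by rewrite (reindex_big_mulgl _ _ (groupVr G3)).
Qed.

Lemma count_swap_pairs_StabProd2 :
  \sum_(a1 in G) \sum_(a2 in G) \sum_(a3 in G) \sum_(a4 in G)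
     ((a1 * a2 * a3 * a4)%g == (a2 * a1 * a4 * a3)%g : nat)
  = \sum_(x in G) \sum_(y in G) #|StabProd2 G x y|.
Proof.
transitivity (\sum_(a1 in G) \sum_(u in G) \sum_(a3 in G) \sum_(v in G)
   ((u ^ a1 * v ^ a3)%g == (u * v)%g : nat)).
  rewrite sum_quadruples_pair_products; do 4!apply: eq_bigr => ? _.
  rewrite [in RHS]eq_sym; congr (nat_of_bool (_ == _)).
    by rewrite !mulgA mulgV mul1g mulgK.
  by rewrite !conjgE !mulgA.
rewrite exchange_big; apply: eq_bigr => u _.
under eq_bigr do rewrite exchange_big.
by rewrite exchange_big; apply: eq_bigr => v _; rewrite card_StabProd2.
Qed.

Lemma count_reverse_StabProd2 :
  \sum_(a1 in G) \sum_(a2 in G) \sum_(a3 in G) \sum_(a4 in G)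
     ((a1 * a2 * a3 * a4)%g == (a4 * a3 * a2 * a1)%g : nat)
  = \sum_(x in G) \sum_(y in G) #|StabProd2 G x y|.
Proof.
transitivity (\sum_(a1 in G) \sum_(u in G) \sum_(a3 in G) \sum_(v in G)
   ((v ^ a3 * u ^ a1)%g == (u * v)%g : nat)).
  rewrite sum_quadruples_pair_products; do 4!apply: eq_bigr => ? _.
  rewrite [in RHS]eq_sym; congr (nat_of_bool (_ == _)).
    by rewrite !mulgA mulgV mul1g mulgK.
  by rewrite !conjgE !mulgA.
rewrite exchange_big [RHS]exchange_big; apply: eq_bigr => u Gu.
under eq_bigr do rewrite exchange_big.
rewrite exchange_big; apply: eq_bigr => v _.
rewrite card_StabProd2 exchange_big [RHS](reindex_big_mulgr _ _ Gu).
apply: eq_bigr => b1 _; rewrite [RHS](reindex_big_mulgr _ _ Gu); apply: eq_bigr => b2 _.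
have uvu : ((u * v) ^ u)%g = (v * u)%g by rewrite conjgE !mulgA mulVg mul1g.
by rewrite -[in LHS](inj_eq (conjg_inj u)) conjMg -!conjgM uvu.
Qed.

Local Open Scope ring_scope.

Lemma sum_card_StabProd2_ratio :
  (\sum_(x in G) \sum_(y in G) #|StabProd2 G x y|)%N%:R / (#|G| ^ 4)%N%:R
  = \sum_(A in classes G) \sum_(B in classes G) \sum_(C in classes G)
      (#|C| * class_mult A B C ^ 2)%N%:R / (#|A| * #|B| * #|G| ^ 2)%N%:R :> rat.
Proof.
under eq_bigr do rewrite (big_classes G addn).
rewrite (big_classes G addn); under eq_bigr do rewrite exchange_big /=.
rewrite natr_sum mulr_suml; apply: eq_bigr => A cA.
rewrite natr_sum mulr_suml; apply: eq_bigr => B cB.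
rewrite -mulr_suml -natr_sum; apply/eqP.
have Apos := card_classes_gt0 cA; have Bpos := card_classes_gt0 cB.
rewrite eqr_div ?pnatr_eq0 -?lt0n ?muln_gt0 ?expn_gt0 ?Apos ?Bpos ?cardG_gt0 //.
rewrite -!natrM eqr_nat; apply/eqP; move: (sum_card_StabProd2_classes cA cB).
set S := \sum_(x in A) _; set T := \sum_(C in classes G) _ => ABS.
have -> : (S * (#|A| * #|B| * #|G| ^ 2) = #|A| * #|B| * S * #|G| ^ 2)%N by ring.
by rewrite ABS; ring.
Qed.

End StabProd.

Local Open Scope ring_scope.

Theorem mainTheorem7 (gT : finGroupType) (G : {group gT}) :
  let S1 := prob4 G (fun a1 a2 a3 a4 =>
              (a1 * a2 * a3 * a4 == a2 * a1 * a4 * a3)%g) in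
  let S2 := prob4 G (fun a1 a2 a3 a4 =>
              (a1 * a2 * a3 * a4 == a4 * a3 * a2 * a1)%g) in
  let S3 := Pr4 G in
  let S4 := ((\sum_(x in G) \sum_(y in G) #|StabProd2 G x y|)%N%:R
               / (#|G| ^ 4)%N%:R : rat) in
  let S5 := (\sum_(A in classes G) \sum_(B in classes G) \sum_(C in classes G)
               (#|C| * class_mult A B C ^ 2)%N%:R
               / (#|A| * #|B| * #|G| ^ 2)%N%:R : rat)%R in
  let S6 := (\sum_(A in classes G) \sum_(B in classes G) \sum_(C in classes G)
               (#|C| * class_mult A B C * class_mult B A C)%N%:R
               / (#|A| * #|B| * #|G| ^ 2)%N%:R : rat)%R in
  [/\ S1 = S2, S2 = S3, S3 = S4, S4 = S5 & S5 = S6].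
Proof.
move=> S1 S2 S3 S4 S5 S6; split.
- by rewrite /S1 /S2 /prob4 count_swap_pairs_StabProd2 count_reverse_StabProd2.
- by [].
- by rewrite /S3 /S4 /Pr4 /prob4 count_reverse_StabProd2.
- exact: sum_card_StabProd2_ratio.
- apply: eq_bigr => A cA; apply: eq_bigr => B cB; apply: eq_bigr => C _.
  by rewrite !class_multE (prod_count_sym _ cA cB) -mulnn mulnA.
Qed.
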